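(* Let $\Gamma$ be an octal game with finitely many nonzero code digits, and let $k$ be the largest index with $d_k\ne0$. Fix positive integers $n_0,p$ and let $M=2n_0+2p+k$. Let $\Phi_M:\mathscr{A}_M\to\mathcal{Q}_M$ be the quotient map of the partial quotient $(\mathcal{Q}_M,\mathcal{P}_M)=\mathcal{Q}_M(\Gamma)$, and suppose $\Phi_M(H_{n+p})=\Phi_M(H_n)$ for all $n$ with $n_0\le n<2n_0+p+k$. Then $\mathcal{Q}(\Gamma)\cong\mathcal{Q}_M(\Gamma)$ (via an isomorphism of bipartite monoids $\iota$ with $\iota(\Phi_M(X))=\Phi(X)$ for all $X\in\mathscr{A}_M$, where $\Phi$ is the quotient map of $\mathcal{Q}(\Gamma)$), and $\Phi(H_{n+p})=\Phi(H_n)$ for all $n\ge n_0$.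
   Context: Games are finite, loopfree impartial games identified with the finite set of their options; disjunctive sum $G+H=\{G'+H\}\cup\{G+H'\}$. Misère outcome: $o^-(G)=\mathscr{P}$ iff $G\neq0$ and every option has outcome $\mathscr{N}$; otherwise $\mathscr{N}$. A set of games is closed if it contains all options of its members and is closed under $+$. For a closed $\mathscr{A}$, $G\equiv_\mathscr{A}H$ iff $o^-(G+X)=o^-(H+X)$ for all $X\in\mathscr{A}$; the misère quotient $\mathcal{Q}(\mathscr{A})=(\mathcal{Q},\mathcal{P})$ consists of the commutative monoid $\mathcal{Q}$ of $\equiv_\mathscr{A}$-classes (with $[G][H]=[G+H]$, identity $[0]$) and the subset $\mathcal{P}$ of classes of misère $\mathscr{P}$-positions; $\Phi(G)=[G]$ is the quotient map. A bipartite monoid is a pair (commutative monoid, subset); an isomorphism of bipartite monoids is a monoid isomorphism mapping the distinguished subset onto the distinguished subset. For any set $\mathscr{S}$ of games, $\mathrm{cl}(\mathscr{S})$ is the closure under addition of the set of all subpositions of members of $\mathscr{S}$. Octal game with code $0.d_1d_2\ldots$ ($0\le d_j<8$, $d_j=\epsilon_0+2\epsilon_1+4\epsilon_2$): $H_n$ is a strip of $n$ boxes; the options of $H_n$ come from removing $j\ge1$ boxes: to $0$ if $n=j$ and $\epsilon_0=1$; to $H_{n-j}$ with $n-j\ge1$ if $\epsilon_1=1$; to $H_a+H_b$ with $a,b\ge1$, $a+b=n-j$ if $\epsilon_2=1$. Then $\mathscr{A}=\mathrm{cl}(\{H_0,H_1,\ldots\})$, $\mathcal{Q}(\Gamma)=\mathcal{Q}(\mathscr{A})$,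 $\mathscr{A}_n=\mathrm{cl}(\{H_0,\ldots,H_n\})$, and the partial quotient is $\mathcal{Q}_n(\Gamma)=\mathcal{Q}(\mathscr{A}_n)$ with quotient map $\Phi_n$. *)

From Stdlib Require List.
From mathcomp Require Import all_boot.
Set Implicit Arguments. Unset Strict Implicit. Unset Printing Implicit Defensive.

(* Finite loopfree impartial games, represented by the (finite) list of options. *)
Inductive game : Type := Game of seq game.

Definition zero_game : game := Game [::].

Definition options (G : game) : seq game := let: Game gs := G in gs.

Fixpoint gsum (G : game) : game -> game :=
  fix inner (H : game) : game :=
    match G, H with
    | Game gs, Game hs =>
        Game ([seq gsum g (Game hs) | g <- gs] ++ [seq inner h | h <- hs])
    end.

(* misère P-position: G <> 0 and every option is an N-position *)
Fixpoint isP (G : game) : bool :=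
  match G with
  | Game gs => ~~ nilp gs && all (fun g => ~~ isP g) gs
  end.

Inductive subpos : game -> game -> Prop :=
  | subpos_refl G : subpos G G
  | subpos_opt G g H : List.In g (options G) -> subpos H g -> subpos H G.

Inductive cl (S : game -> Prop) : game -> Prop :=
  | cl_sub G H : S G -> subpos H G -> cl S H
  | cl_sum G H : cl S G -> cl S H -> cl S (gsum G H).

Definition equivA (A : game -> Prop) (G H : game) : Prop :=
  forall X, A X -> isP (gsum G X) = isP (gsum H X).

(* the class [X] of X (X in A) belongs to the distinguished subset P of Q(A) *)
Definition inPclass (A : game -> Prop) (X : game) : Prop :=
  exists Y, [/\ A Y, equivA A X Y & isP Y].

(* iota : game -> game, acting on representatives, induces an isomorphism of
   bipartite monoids Q(A) -> Q(B) (quotients presented as setoids: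
   carrier = members of A, equality = equivA A). *)
Definition bip_iso (A B : game -> Prop) (iota : game -> game) : Prop :=
  [/\ (forall X, A X -> B (iota X)),
      (* well defined on classes and injective *)
      (forall X Y, A X -> A Y -> (equivA A X Y <-> equivA B (iota X) (iota Y))),
      (forall Z, B Z -> exists X, A X /\ equivA B (iota X) Z),
      (forall X Y, A X -> A Y -> equivA B (iota (gsum X Y)) (gsum (iota X) (iota Y)))
        /\ equivA B (iota zero_game) zero_game
    &
      (forall X, A X -> (inPclass A X <-> inPclass B (iota X)))].

(* Octal games.  The code 0.d_1 d_2 ... is given by d : nat -> nat (d 0 unused). *)
Definition eps0 (dj : nat) : bool := odd dj.
Definition eps1 (dj : nat) : bool := odd dj./2.
Definition eps2 (dj : nat) : bool := odd (dj./2)./2.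

(* options of H_n given prev = [:: H_0; ...; H_{n-1}] *)
Definition mkH (d : nat -> nat) (n : nat) (prev : seq game) : game :=
  let Hp i := nth zero_game prev i in
  Game (flatten [seq
     (if eps0 (d j) && (j == n) then [:: zero_game] else [::]) ++
     (if eps1 (d j) && (j < n) then [:: Hp (n - j)] else [::]) ++
     (if eps2 (d j)
      then [seq gsum (Hp a) (Hp (n - j - a)) | a <- iota 1 (n - j).-1]
      else [::])
   | j <- iota 1 n]).

Fixpoint Hlist (d : nat -> nat) (n : nat) : seq game :=
  match n with
  | 0 => [:: mkH d 0 [::]]
  | m.+1 => rcons (Hlist d m) (mkH d m.+1 (Hlist d m))
  end.

Definition Hn (d : nat -> nat) (n : nat) : game := nth zero_game (Hlist d n) n.

Definition Aoct (d : nat -> nat) : game -> Prop := cl (fun G => exists n, G = Hn d n).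
Definition Aoct_n (d : nat -> nat) (m : nat) : game -> Prop :=
  cl (fun G => exists n, n <= m /\ G = Hn d n).

From mathcomp Require Import all_boot zify.
From Stdlib Require List.
Set Implicit Arguments. Unset Strict Implicit. Unset Printing Implicit Defensive.

(* Write A_N for cl{H_0, ..., H_N} and suppose
   that, for some N >= M - 1, H_{n+p} and H_n are indistinguishable modulo A_N whenever
   n0 <= n and n + p <= N; for N = M - 1 this is the hypothesis.  A move removes at most
   k boxes, and when H_{N+1} or H_{N+1-p} is split the larger part has at least n0 + p,
   resp. n0 boxes, so it can be shortened, resp. lengthened, by p: the options of
   H_{N+1} and H_{N+1-p} pair up modulo A_N.  Every element of A_{N+1} is a sum
   Z + n.H_{N+1} with Z in A_N, and induction on n and Z shows that H_{N+1} may be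
   exchanged for H_{N+1-p} in such sums.  Hence A_N-indistinguishability on A_N implies
   A_{N+1}-indistinguishability, and H_{N+1} is indistinguishable from H_{N+1-p} modulo
   A_{N+1}, which propagates the hypothesis from N to N + 1.  In the limit,
   A-indistinguishability coincides with A_M-indistinguishability on A_M and every
   element of A is equivalent to one of A_M, so the identity induces Q_M(Gamma) ~ Q(Gamma). *)


Definition game_ind_in (P : game -> Prop)
    (IH : forall G, (forall g, List.In g (options G) -> P g) -> P G) : forall G, P G :=
  fix F G := match G with Game gs => IH (Game gs)
   ((fix F_in (l : seq game) : forall g, List.In g l -> P g :=
      match l with
      | [::] => fun g gl => False_ind _ gl
      | h :: t => fun g gl => match gl with
           | or_introl e => eq_ind h P (F h) g e
           | or_intror gt => F_in t g gt end end) gs) end.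

Lemma In_map (A B : Type) (f : A -> B) (l : seq A) y :
  List.In y (map f l) <-> exists x, f x = y /\ List.In x l.
Proof. exact: List.in_map_iff. Qed.

Lemma In_flatten (A : Type) (ss : seq (seq A)) x :
  List.In x (flatten ss) <-> exists s, List.In s ss /\ List.In x s.
Proof. exact: List.in_concat. Qed.

Lemma In_iota (m n i : nat) : List.In i (iota m n) <-> m <= i < m + n.
Proof.
elim: n m => [|n IH] m /=; first by split=> //; lia.
rewrite IH; lia.
Qed.

Lemma In_if (A : Type) (b : bool) (l : seq A) x :
  List.In x (if b then l else [::]) <-> b /\ List.In x l.
Proof. by case: b; split=> // -[]. Qed.

Lemma In_gsum G H u : List.In u (options (gsum G H)) <->
  (exists2 g, List.In g (options G) & u = gsum g H) \/
  (exists2 h, List.In h (options H) & u = gsum G h).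
Proof.
case: G H => gs [hs]; rewrite /= List.in_app_iff !In_map.
split=> [] [] [x].
- by case=> <-; left; exists x.
- by case=> <-; right; exists x.
- by move=> ? ->; left; exists x.
- by move=> ? ->; right; exists x.
Qed.

Lemma all_In (A : Type) (a : pred A) (l : seq A) :
  all a l <-> forall x, List.In x l -> a x.
Proof. exact: List.forallb_forall. Qed.

Lemma isPE G : isP G <-> options G <> [::] /\
  forall g, List.In g (options G) -> isP g = false.
Proof.
case: G => gs /=; rewrite -(rwP andP) all_In; split.
- case=> ne all_N; split=> [|g /all_N /negbTE //]; by case: gs {all_N} ne.
- case=> ne all_N; split=> [|g /all_N -> //]; by case: gs {all_N} ne.
Qed.

Lemma isP_transfer U V :
  (options U = [::] <-> options V = [::]) ->
  ((exists2 u, List.In u (options U) & isP u) <->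
   (exists2 v, List.In v (options V) & isP v)) ->
  isP U = isP V.
Proof.
have half W W' : (options W = [::] -> options W' = [::]) ->
    ((exists2 w, List.In w (options W) & isP w) ->
     exists2 w', List.In w' (options W') & isP w') ->
    isP W' -> isP W.
  move=> nilW PW /isPE [ne' allN']; apply/isPE; split; first by move/nilW.
  move=> g g_opt; apply/negbTE/negP => Pg.
  by have [w' /allN' ->] := PW (ex_intro2 _ _ g g_opt Pg).
move=> [nilU nilV] [PU PV]; apply/idP/idP; exact: half.
Qed.

Definition opts_corr (R : game -> game -> Prop) (G H : game) : Prop :=
  (forall g, List.In g (options G) -> exists2 h, List.In h (options H) & R g h) /\
  (forall h, List.In h (options H) -> exists2 g, List.In g (options G) & R g h).

Lemma opts_corr_nil R G H : opts_corr R G H -> options G = [::] <-> options H = [::].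
Proof.
case=> GH HG; split=> nil0.
- case E: (options H) => [|h l] //.
  have h_opt : List.In h (options H) by rewrite E; left.
  by have [g] := HG h h_opt; rewrite nil0.
- case E: (options G) => [|g l] //.
  have g_opt : List.In g (options G) by rewrite E; left.
  by have [h] := GH g g_opt; rewrite nil0.
Qed.

Lemma isP_opts_corr R G H :
  (forall g h, List.In g (options G) -> R g h -> isP g = isP h) ->
  opts_corr R G H -> isP G = isP H.
Proof.
move=> RP corr; apply: isP_transfer; first exact: opts_corr_nil corr.
case: corr => GH HG; split=> [[g g_opt Pg] | [h h_opt Ph]].
- by have [h h_opt Rgh] := GH g g_opt; exists h; rewrite // -(RP g h).
- by have [g g_opt Rgh] := HG h h_opt; exists g; rewrite // (RP g h).
Qed.

(** * Sums of games up to isomorphism *)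

(* Identity of games up to the order and multiplicity of options. *)
Inductive bis : game -> game -> Prop :=
  bisI G H : opts_corr bis G H -> bis G H.

Lemma bisE G H : bis G H -> opts_corr bis G H.
Proof. by case. Qed.

Lemma bis_refl G : bis G G.
Proof.
elim/game_ind_in: G => G IH; constructor.
by split=> g g_opt; exists g => //; exact: IH.
Qed.

Lemma bis_sym G H : bis G H -> bis H G.
Proof.
elim/game_ind_in: G H => G IH H /bisE [GH HG]; constructor; split.
- by move=> h /HG [g g_opt gh]; exists g => //; exact: IH.
- by move=> g g_opt; have [h h_opt gh] := GH g g_opt; exists h => //; exact: IH.
Qed.

Lemma bis_trans G H K : bis G H -> bis H K -> bis G K.
Proof.
elim/game_ind_in: G H K => G IH H K /bisE [GH HG] /bisE [HK KH]; constructor; split.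
- move=> g g_opt; have [h /HK [k k_opt hk] gh] := GH g g_opt.
  by exists k => //; exact: IH gh hk.
- move=> k /KH [h /HG [g g_opt gh] hk].
  by exists g => //; exact: IH gh hk.
Qed.

Lemma isP_bis G H : bis G H -> isP G = isP H.
Proof.
elim/game_ind_in: G H => G IH H /bisE; apply: isP_opts_corr => g h g_opt.
exact: IH.
Qed.

Lemma In_gsuml G H g : List.In g (options G) -> List.In (gsum g H) (options (gsum G H)).
Proof. by move=> g_opt; apply/In_gsum; left; exists g. Qed.

Lemma In_gsumr G H h : List.In h (options H) -> List.In (gsum G h) (options (gsum G H)).
Proof. by move=> h_opt; apply/In_gsum; right; exists h. Qed.

Lemma bis_gsum G G' H H' : bis G G' -> bis H H' -> bis (gsum G H) (gsum G' H').
Proof.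
elim/game_ind_in: G G' H H' => G IHG G' H H' /bisE [GG' G'G].
elim/game_ind_in: H H' => H IHH H' /bisE [HH' H'H]; constructor.
split=> u /In_gsum [[x x_opt ->]|[x x_opt ->]].
- by have [g' ? ?] := GG' x x_opt; exists (gsum g' H'); [apply: In_gsuml | apply: IHG].
- by have [h' ? ?] := HH' x x_opt; exists (gsum G' h'); [apply: In_gsumr | apply: IHH].
- by have [g ? ?] := G'G x x_opt; exists (gsum g H); [apply: In_gsuml | apply: IHG].
- by have [h ? ?] := H'H x x_opt; exists (gsum G h); [apply: In_gsumr | apply: IHH].
Qed.

Lemma gsumC G H : bis (gsum G H) (gsum H G).
Proof.
elim/game_ind_in: G H => G IHG H; elim/game_ind_in: H => H IHH; constructor.
split=> u /In_gsum [[x x_opt ->]|[x x_opt ->]].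
- by exists (gsum H x); [apply: In_gsumr | apply: IHG].
- by exists (gsum x G); [apply: In_gsuml | apply: IHH].
- by exists (gsum G x); [apply: In_gsumr | apply: IHH].
- by exists (gsum x H); [apply: In_gsuml | apply: IHG].
Qed.

Lemma gsumA G H K : bis (gsum G (gsum H K)) (gsum (gsum G H) K).
Proof.
elim/game_ind_in: G H K => G IHG H K; elim/game_ind_in: H K => H IHH K.
elim/game_ind_in: K => K IHK; constructor.
split=> u /In_gsum [[x x_opt ->]|[x + ->]].
- by exists (gsum (gsum x H) K); [do 2 apply: In_gsuml | apply: IHG].
- case/In_gsum=> [[y y_opt ->]|[y y_opt ->]].
  + by exists (gsum (gsum G y) K); [apply/In_gsuml/In_gsumr | apply: IHH].
  + by exists (gsum (gsum G H) y); [apply: In_gsumr | apply: IHK].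
- case/In_gsum: x_opt => [[y y_opt ->]|[y y_opt ->]].
  + by exists (gsum y (gsum H K)); [apply: In_gsuml | apply: IHG].
  + by exists (gsum G (gsum y K)); [apply/In_gsumr/In_gsuml | apply: IHH].
- by exists (gsum G (gsum H x)); [do 2 apply: In_gsumr | apply: IHK].
Qed.

Lemma gsum0 G : bis (gsum G zero_game) G.
Proof.
elim/game_ind_in: G => G IH; constructor.
split=> [u /In_gsum [[g g_opt ->]|[h []]] | g g_opt].
- by exists g => //; apply: IH.
- by exists (gsum g zero_game); [apply: In_gsuml | apply: IH].
Qed.

Lemma gsumCA G H K : bis (gsum G (gsum H K)) (gsum H (gsum G K)).
Proof.
apply: bis_trans (gsumA _ _ _) _; apply: bis_trans (bis_sym (gsumA _ _ _)).
exact: bis_gsum (gsumC _ _) (bis_refl _).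
Qed.

Lemma gsumACA G H K L :
  bis (gsum (gsum G H) (gsum K L)) (gsum (gsum G K) (gsum H L)).
Proof.
apply: bis_trans (bis_sym (gsumA _ _ _)) _; apply: bis_trans (gsumA _ _ _).
exact: bis_gsum (bis_refl _) (gsumCA _ _ _).
Qed.

Fixpoint gmul (n : nat) (G : game) : game :=
  if n is m.+1 then gsum G (gmul m G) else zero_game.

Lemma gmulD m n G : bis (gsum (gmul m G) (gmul n G)) (gmul (m + n) G).
Proof.
elim: m => [|m IH] /=; first exact: bis_trans (gsumC _ _) (gsum0 _).
exact: bis_trans (bis_sym (gsumA _ _ _)) (bis_gsum (bis_refl _) IH).
Qed.

Lemma In_gmul n G u : List.In u (options (gmul n.+1 G)) ->
  exists2 g, List.In g (options G) & bis u (gsum g (gmul n G)).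
Proof.
elim: n u => [|n IH] u /In_gsum [[g g_opt ->]|[h h_opt ->]];
  try by exists g => //; apply: bis_refl.
  by case: h_opt.
have [g g_opt hg] := IH h h_opt; exists g => //.
exact: bis_trans (bis_gsum (bis_refl G) hg) (gsumCA _ _ _).
Qed.

(** * Indistinguishability modulo a closed set *)

Definition closedA (A : game -> Prop) : Prop :=
  [/\ A zero_game, (forall G H, A G -> A H -> A (gsum G H)) &
      (forall G g, A G -> List.In g (options G) -> A g)].

Section EquivA.
Variable A : game -> Prop.

Lemma equivA_sym G H : equivA A G H -> equivA A H G.
Proof. by move=> GH X AX; rewrite GH. Qed.

Lemma equivA_trans G H K : equivA A G H -> equivA A H K -> equivA A G K.
Proof. by move=> GH HK X AX; rewrite GH // HK. Qed.

Lemma bis_equivA G H : bis G H -> equivA A G H.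
Proof. by move=> GH X _; apply/isP_bis/bis_gsum/bis_refl. Qed.

Lemma equivA_sub (B : game -> Prop) G H :
  (forall X, B X -> A X) -> equivA A G H -> equivA B G H.
Proof. by move=> BA GH X /BA; apply: GH. Qed.

Hypothesis A_closed : closedA A.

Lemma equivA_isP G H : equivA A G H -> isP G = isP H.
Proof.
have [A0 _ _] := A_closed.
by move=> /(_ _ A0); rewrite (isP_bis (gsum0 G)) (isP_bis (gsum0 H)).
Qed.

Lemma equivA_gsuml K G H : A K -> equivA A G H -> equivA A (gsum G K) (gsum H K).
Proof.
have [_ AD _] := A_closed.
move=> AK GH X AX; rewrite -(isP_bis (gsumA G K X)) -(isP_bis (gsumA H K X)).
exact: GH (AD _ _ AK AX).
Qed.

Lemma equivA_gsumr K G H : A K -> equivA A G H -> equivA A (gsum K G) (gsum K H).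
Proof.
move=> AK GH; apply: equivA_trans (bis_equivA (gsumC _ _)) _.
exact: equivA_trans (equivA_gsuml AK GH) (bis_equivA (gsumC _ _)).
Qed.

Lemma closedA_gmul n G : A G -> A (gmul n G).
Proof. by have [A0 AD _] := A_closed; move=> AG; elim: n => //= n; apply: AD. Qed.

Lemma equivA_gmul n G H : A G -> A H -> equivA A G H -> equivA A (gmul n G) (gmul n H).
Proof.
move=> AG AH GH; elim: n => //= n IH.
apply: equivA_trans (equivA_gsuml (closedA_gmul n AG) GH) _.
exact: equivA_gsumr AH IH.
Qed.

End EquivA.

Section Exchange.
Variables (A : game -> Prop) (G X : game).
Hypotheses (A_closed : closedA A) (AX : A X).
Hypothesis AoptG : forall g, List.In g (options G) -> A g.
Hypothesis GX : opts_corr (equivA A) G X.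

Lemma isP_gmul_exchange n Z : A Z -> isP (gsum Z (gmul n G)) = isP (gsum Z (gmul n X)).
Proof.
have [_ AD Aopt] := A_closed.
elim: n Z => [//|n IHn] Z; elim/game_ind_in: Z => Z IHZ AZ.
have AnX := closedA_gmul A_closed n AX.
have move_in_copy g x : A g -> equivA A g x ->
    isP (gsum Z (gsum g (gmul n G))) = isP (gsum Z (gsum x (gmul n X))).
  move=> Ag gx; rewrite (isP_bis (gsumA _ _ _)) IHn; last exact: AD.
  rewrite -(isP_bis (gsumA _ _ _)) !(isP_bis (gsumCA Z _ _)).
  exact: gx (AD _ _ AZ AnX).
apply: (@isP_opts_corr (fun u v => isP u = isP v)) => [//|].
split=> u /In_gsum [[z z_opt ->]|[w]].
- exists (gsum z (gmul n.+1 X)); first exact: In_gsuml.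
  exact: IHZ (Aopt _ _ AZ z_opt).
- move=> /In_gmul [g g_opt wg] ->; have [x x_opt gx] := GX.1 g g_opt.
  exists (gsum Z (gsum x (gmul n X))); first exact/In_gsumr/In_gsuml.
  rewrite (isP_bis (bis_gsum (bis_refl Z) wg)); exact: move_in_copy (AoptG g_opt) gx.
- exists (gsum z (gmul n.+1 G)); first exact: In_gsuml.
  exact: IHZ (Aopt _ _ AZ z_opt).
- move=> /In_gmul [x x_opt wx] ->; have [g g_opt gx] := GX.2 x x_opt.
  exists (gsum Z (gsum g (gmul n G))); first exact/In_gsumr/In_gsuml.
  rewrite (isP_bis (bis_gsum (bis_refl Z) wx)); exact: move_in_copy (AoptG g_opt) gx.
Qed.

Lemma equivA_gmul_exchange n Z : A Z ->
  equivA A (gsum Z (gmul n G)) (gsum Z (gmul n X)).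
Proof.
have [_ AD _] := A_closed.
move=> AZ W AW; rewrite !(isP_bis (gsumC (gsum Z _) W)) !(isP_bis (gsumA _ _ _)).
exact: isP_gmul_exchange (AD _ _ AW AZ).
Qed.

Variable B : game -> Prop.
Hypothesis B_gen : forall Y, B Y -> exists Z n, A Z /\ bis Y (gsum Z (gmul n G)).

Lemma equivA_gen_lift U V : A U -> A V -> equivA A U V -> equivA B U V.
Proof.
have [_ AD _] := A_closed.
move=> AU AV UV Y /B_gen [Z [n [AZ YZ]]].
have AnX := closedA_gmul A_closed n AX.
have isP_test W : A W -> isP (gsum W Y) = isP (gsum W (gsum Z (gmul n X))).
  move=> AW; rewrite (isP_bis (bis_gsum (bis_refl W) YZ)) !(isP_bis (gsumC W _)).
  exact: equivA_gmul_exchange.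
by rewrite isP_test // isP_test // UV //; apply: AD.
Qed.

Lemma equivA_gen_exchange : equivA B G X.
Proof.
move=> Y /B_gen [Z [n [AZ YZ]]].
rewrite !(isP_bis (bis_gsum (bis_refl _) YZ)) (isP_bis (gsumCA G _ _)).
rewrite (isP_gmul_exchange n.+1 AZ) /= (isP_bis (gsumCA Z _ _)) !(isP_bis (gsumC X _)).
by rewrite (equivA_gmul_exchange n AZ).
Qed.

End Exchange.

(** * Octal games *)

Lemma subpos_opt_trans G H g : subpos H G -> List.In g (options H) -> subpos g G.
Proof.
elim=> [K|K k K' k_opt _ IH] g_opt; first exact: subpos_opt g_opt (subpos_refl g).
exact: subpos_opt k_opt (IH g_opt).
Qed.

Lemma subposE G H : subpos H G ->
  H = G \/ exists2 g, List.In g (options G) & subpos H g.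
Proof. by case=> [|K g K' g_opt Hg]; [left | right; exists g]. Qed.

Section Closure.
Variable S : game -> Prop.

Lemma cl_opt G g : cl S G -> List.In g (options G) -> cl S g.
Proof.
move=> clG; elim: clG g => [K H SK HK | K H clK IHK clH IHH] g g_opt.
  exact: cl_sub SK (subpos_opt_trans HK g_opt).
by case/In_gsum: g_opt => [[x x_opt ->]|[x x_opt ->]]; apply: cl_sum; auto.
Qed.

Lemma cl_subpos G H : cl S G -> subpos H G -> cl S H.
Proof.
move=> + HG; elim: HG => // K k K' k_opt _ IH clK.
exact: IH (cl_opt clK k_opt).
Qed.

Lemma cl_mono (S' : game -> Prop) G : (forall X, S X -> S' X) -> cl S G -> cl S' G.
Proof.
move=> SS'; elim=> [K H SK HK | K H _ IHK _ IHH]; last exact: cl_sum.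
exact: cl_sub (SS' _ SK) HK.
Qed.

End Closure.

Lemma closedA_cl S : cl S zero_game -> closedA (cl S).
Proof. by move=> cl0; split=> //; [exact: cl_sum | exact: cl_opt]. Qed.

Section Octal.
Variable d : nat -> nat.

Lemma size_Hlist m : size (Hlist d m) = m.+1.
Proof. by elim: m => //= m IH; rewrite size_rcons IH. Qed.

Lemma nth_Hlist m i : i <= m -> nth zero_game (Hlist d m) i = Hn d i.
Proof.
elim: m => [|m IH]; first by rewrite leqn0 => /eqP ->.
rewrite leq_eqVlt => /orP [/eqP -> //|lt_im].
by rewrite /= nth_rcons size_Hlist lt_im IH.
Qed.

Lemma Hn_succ m : Hn d m.+1 = mkH d m.+1 (Hlist d m).
Proof. by rewrite /Hn /= nth_rcons size_Hlist ltnn eqxx. Qed.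

(* [Hmove m j u]: removing [j] boxes from a strip of [m] leaves [u]. *)
Inductive Hmove (m : nat) : nat -> game -> Prop :=
  | Hmove_clear : 0 < m -> eps0 (d m) -> Hmove m m zero_game
  | Hmove_take j i : 0 < j -> 0 < i -> j + i = m -> eps1 (d j) -> Hmove m j (Hn d i)
  | Hmove_split j a b : 0 < j -> 0 < a -> 0 < b -> j + a + b = m -> eps2 (d j) ->
      Hmove m j (gsum (Hn d a) (Hn d b)).

Lemma opts_Hn m u : List.In u (options (Hn d m)) <-> exists j, Hmove m j u.
Proof.
case: m => [|m]; first by split=> // -[j []]; lia.
rewrite Hn_succ /mkH -[options _]/(flatten _) In_flatten; split.
- case=> s [/In_map [j [<- /In_iota j_range]]].
  rewrite !List.in_app_iff !In_if.
  case=> [[/andP [e0 /eqP ej] [<-|[]]] | [[/andP [e1 lt_jm] [<-|[]]] | [e2]]].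
  + by subst j; exists m.+1; apply: Hmove_clear.
  + exists j; rewrite nth_Hlist; last lia.
    by apply: Hmove_take => //; lia.
  + case/In_map=> a [<- /In_iota a_range]; exists j.
    rewrite !nth_Hlist; try lia.
    by apply: Hmove_split => //; lia.
- case=> j mv; eexists; split.
    by apply/In_map; exists j; split; [reflexivity | apply/In_iota; case: mv; lia].
  rewrite !List.in_app_iff !In_if.
  case: mv => [_ e0 | {}j i j0 i0 ji e1 | {}j a b j0 a0 b0 jab e2].
  + by left; rewrite e0 eqxx; split; [|left].
  + right; left; rewrite e1; split; first lia.
    by left; rewrite nth_Hlist; [congr Hn; lia | lia].
  + right; right; split=> //; apply/In_map; exists a; split; last by apply/In_iota; lia.
    by rewrite !nth_Hlist; try lia; congr (gsum _ (Hn d _)); lia.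
Qed.

Lemma Hn_An N i : i <= N -> Aoct_n d N (Hn d i).
Proof. by move=> iN; apply: cl_sub (subpos_refl _); exists i. Qed.

Lemma An_mono N N' G : N <= N' -> Aoct_n d N G -> Aoct_n d N' G.
Proof. by move=> NN'; apply: cl_mono => _ [i [iN ->]]; exists i; split=> //; lia. Qed.

Lemma An_A N G : Aoct_n d N G -> Aoct d G.
Proof. by apply: cl_mono => _ [i [_ ->]]; exists i. Qed.

Lemma A_An G : Aoct d G -> exists N, Aoct_n d N G.
Proof.
elim=> [_ H [i ->] HG | G1 G2 _ [N1 A1] _ [N2 A2]].
  by exists i; apply: cl_sub HG; exists i.
by exists (maxn N1 N2); apply: cl_sum; [apply: An_mono A1 | apply: An_mono A2]; lia.
Qed.

Lemma closedA_An N : closedA (Aoct_n d N).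
Proof. exact/closedA_cl/(Hn_An (leq0n N)). Qed.

Lemma closedA_A : closedA (Aoct d).
Proof. by apply: closedA_cl; apply: cl_sub (subpos_refl _); exists 0. Qed.

Lemma opt_Hn_An m g : List.In g (options (Hn d m)) -> Aoct_n d m.-1 g.
Proof.
case/opts_Hn=> j [_ _ | {}j i j0 i0 ji _ | {}j a b j0 a0 b0 jab _].
- exact: Hn_An (leq0n _).
- by apply: Hn_An; lia.
- by apply: cl_sum; apply: Hn_An; lia.
Qed.

Lemma An_succ_gen N Y : Aoct_n d N.+1 Y ->
  exists Z n, Aoct_n d N Z /\ bis Y (gsum Z (gmul n (Hn d N.+1))).
Proof.
have gmul0 Z : bis Z (gsum Z (gmul 0 (Hn d N.+1))) by exact: bis_sym (gsum0 Z).
elim=> [_ H [i [iN ->]] HG | Y1 Y2 _ [Z1 [n1 [A1 Y1Z]]] _ [Z2 [n2 [A2 Y2Z]]]].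
- case/subposE: HG => [-> | [g g_opt Hg]].
  + case: (ltnP i N.+1) => [lt_iN | le_Ni].
      by exists (Hn d i), 0; split; [apply: Hn_An | exact: gmul0].
    have -> : i = N.+1 by lia.
    exists zero_game, 1; split; first exact: Hn_An (leq0n _).
    exact: bis_sym (bis_trans (gsumC _ _) (bis_trans (gsum0 _) (gsum0 _))).
  + exists H, 0; split; last exact: gmul0.
    by apply: cl_subpos Hg; apply: An_mono (opt_Hn_An g_opt); lia.
- exists (gsum Z1 Z2), (n1 + n2); split; first exact: cl_sum.
  apply: bis_trans (bis_gsum Y1Z Y2Z) _; apply: bis_trans (gsumACA _ _ _ _) _.
  exact: bis_gsum (bis_refl _) (gmulD _ _ _).
Qed.

End Octal.

(** * Periodicity *)

Lemma equivA_A_An d N0 U V :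
  (forall N, N0 <= N -> equivA (Aoct_n d N) U V) -> equivA (Aoct d) U V.
Proof.
move=> UV X /A_An [N AX]; apply: (UV (maxn N N0)); first exact: leq_maxr.
exact: An_mono (leq_maxl N N0) AX.
Qed.

Lemma bip_iso_id (A B : game -> Prop) : closedA B -> (forall X, A X -> B X) ->
  (forall U V, A U -> A V -> equivA A U V -> equivA B U V) ->
  (forall Z, B Z -> exists X, A X /\ equivA B X Z) ->
  bip_iso A B (fun X => X).
Proof.
move=> B_closed AB lift surj; split=> //.
- by move=> X Y AX AY; split; [exact: lift | exact: equivA_sub].
- move=> X AX; split=> [[Y [AY XY PY]] | [Y [BY XY PY]]].
    by exists Y; split; [exact: AB | exact: lift | ].
  by exists X; split; rewrite // (equivA_isP B_closed XY).
Qed.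

Section Periodicity.
Variables (d : nat -> nat) (k n0 p : nat).
Hypotheses (dk0 : forall j, k < j -> d j = 0) (n0_gt0 : 0 < n0) (p_gt0 : 0 < p).
Local Notation M := (2 * n0 + 2 * p + k).

Definition periodic_upto N := forall n, n0 <= n -> n + p <= N ->
  equivA (Aoct_n d N) (Hn d (n + p)) (Hn d n).

Lemma Hmove_le m j u : Hmove d m j u -> j <= k.
Proof.
case=> [_ e | {}j i _ _ _ e | {}j a b _ _ _ _ e]; case: leqP => // /dk0 dj;
  by rewrite dj in e.
Qed.

Section Shift.
Variables (N m : nat).
Hypotheses (mpN : m + p = N.+1) (MN : M <= N.+1) (perN : periodic_upto N).

Lemma Hmove_shift_down j u : Hmove d (m + p) j u ->
  exists2 u', Hmove d m j u' & equivA (Aoct_n d N) u u'.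
Proof.
move=> mv; have jk := Hmove_le mv.
case: mv jk => [_ _ | {}j i j0 i0 ji e | {}j a b j0 a0 b0 jab e] jk; first lia.
  exists (Hn d (i - p)); first by apply: Hmove_take => //; lia.
  by have := perN (n := i - p); rewrite subnK; [apply; lia | lia].
wlog le_ba : a b a0 b0 jab / b <= a => [wlog_ba | ].
  case: (leqP b a) => [|/ltnW le_ab]; first exact: wlog_ba.
  have [u' mv' e'] := wlog_ba b a b0 a0 ltac:(lia) le_ab.
  by exists u' => //; apply: equivA_trans (bis_equivA (gsumC _ _)) e'.
exists (gsum (Hn d (a - p)) (Hn d b)); first by apply: Hmove_split => //; lia.
apply: equivA_gsuml; first by apply/closedA_An.
  by apply: Hn_An; lia.
by have := perN (n := a - p); rewrite subnK; [apply; lia | lia].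
Qed.

Lemma Hmove_shift_up j u : Hmove d m j u ->
  exists2 u', Hmove d (m + p) j u' & equivA (Aoct_n d N) u' u.
Proof.
move=> mv; have jk := Hmove_le mv.
case: mv jk => [_ _ | {}j i j0 i0 ji e | {}j a b j0 a0 b0 jab e] jk; first lia.
  exists (Hn d (i + p)); first by apply: Hmove_take => //; lia.
  by apply: perN; lia.
wlog le_ba : a b a0 b0 jab / b <= a => [wlog_ba | ].
  case: (leqP b a) => [|/ltnW le_ab]; first exact: wlog_ba.
  have [u' mv' e'] := wlog_ba b a b0 a0 ltac:(lia) le_ab.
  by exists u' => //; apply: equivA_trans e' (bis_equivA (gsumC _ _)).
exists (gsum (Hn d (a + p)) (Hn d b)); first by apply: Hmove_split => //; lia.
apply: equivA_gsuml; first by apply/closedA_An.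
  by apply: Hn_An; lia.
by apply: perN; lia.
Qed.

Lemma opts_corr_shift : opts_corr (equivA (Aoct_n d N)) (Hn d N.+1) (Hn d m).
Proof.
rewrite -mpN; split=> u /opts_Hn [j].
- by case/Hmove_shift_down=> u' mv' e; exists u' => //; apply/opts_Hn; exists j.
- by case/Hmove_shift_up=> u' mv' e; exists u' => //; apply/opts_Hn; exists j.
Qed.

Lemma periodic_succ : periodic_upto N.+1 /\
  forall U V, Aoct_n d N U -> Aoct_n d N V ->
    equivA (Aoct_n d N) U V -> equivA (Aoct_n d N.+1) U V.
Proof.
have AHm : Aoct_n d N (Hn d m) by apply: Hn_An; lia.
have gen := @An_succ_gen d N; have AoptH := @opt_Hn_An d N.+1.
have lift := equivA_gen_lift (closedA_An d N) AHm AoptH opts_corr_shift gen.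
split=> [n n0n npN | //]; case: (leqP (n + p) N) => npN'.
  by apply: lift; [apply: Hn_An; lia.. | apply: perN].
have [-> ->] : n + p = N.+1 /\ n = m by lia.
exact (equivA_gen_exchange (closedA_An d N) AHm AoptH opts_corr_shift gen).
Qed.

End Shift.

Hypothesis base : forall n, n0 <= n < 2 * n0 + p + k ->
  equivA (Aoct_n d M) (Hn d (n + p)) (Hn d n).

Lemma periodic_ge N : M <= N.+1 -> periodic_upto N.
Proof.
elim: N => [|N IH] MN; first lia.
case: (ltnP N.+1 M) => [lt_NM | le_MN].
  move=> n n0n npN; apply: equivA_sub (base _); last lia.
  by move=> X; apply: An_mono; lia.
have mpN : N.+1 - p + p = N.+1 by lia.
exact: (periodic_succ mpN le_MN (IH le_MN)).1.
Qed.

Lemma equivA_An_ge N U V : M <= N -> Aoct_n d M U -> Aoct_n d M V ->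
  equivA (Aoct_n d M) U V -> equivA (Aoct_n d N) U V.
Proof.
move=> + AU AV UV; elim: N => [|N IH] MN; first lia.
case: (ltnP M N.+1) => [lt_MN | le_NM]; last by have -> : N.+1 = M by lia.
have mpN : N.+1 - p + p = N.+1 by lia.
have [_ lift] := periodic_succ mpN (ltnW lt_MN) (periodic_ge (ltnW lt_MN)).
by apply: lift; [apply: An_mono AU | apply: An_mono AV | apply: IH]; lia.
Qed.

Lemma periodic n : n0 <= n -> equivA (Aoct d) (Hn d (n + p)) (Hn d n).
Proof.
move=> n0n; apply: (@equivA_A_An d (n + p + M)) => N le.
by apply: periodic_ge; lia.
Qed.

Lemma equivA_AM_A U V : Aoct_n d M U -> Aoct_n d M V ->
  equivA (Aoct_n d M) U V -> equivA (Aoct d) U V.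
Proof.
by move=> AU AV UV; apply: (@equivA_A_An d M) => N MN; apply: equivA_An_ge MN AU AV UV.
Qed.

Lemma AM_represents N Z : Aoct_n d N Z ->
  exists X, Aoct_n d M X /\ equivA (Aoct d) X Z.
Proof.
elim: N Z => [|N IH] Z AZ; first by exists Z; split=> //; apply: An_mono AZ.
case: (leqP N.+1 M) => [le_NM | lt_MN].
  by exists Z; split=> //; apply: An_mono AZ.
have [W [n [AW ZW]]] := An_succ_gen AZ.
have AHNp : Aoct_n d N (Hn d (N.+1 - p)) by apply: Hn_An; lia.
have [X [AX XW]] := IH _ (cl_sum AW (closedA_gmul (closedA_An d N) n AHNp)).
have HNp : equivA (Aoct d) (Hn d (N.+1 - p)) (Hn d N.+1).
  by apply: equivA_sym; have := @periodic (N.+1 - p); rewrite subnK; [apply; lia | lia].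
have AX'Z : equivA (Aoct d) (gsum W (gmul n (Hn d (N.+1 - p)))) Z.
  apply: equivA_trans (bis_equivA (bis_sym ZW)).
  apply: (equivA_gsumr (closedA_A d) (An_A AW)).
  exact (equivA_gmul (closedA_A d) n (An_A AHNp) (An_A (Hn_An d (leqnn N.+1))) HNp).
by exists X; split=> //; apply: equivA_trans XW AX'Z.
Qed.

End Periodicity.

Theorem mainTheorem12 (d : nat -> nat) (k n0 p : nat) :
  (forall j, d j < 8) ->
  0 < k -> d k != 0 -> (forall j, k < j -> d j = 0) ->
  0 < n0 -> 0 < p ->
  let M := 2 * n0 + 2 * p + k in
  (forall n, n0 <= n < 2 * n0 + p + k ->
     equivA (Aoct_n d M) (Hn d (n + p)) (Hn d n)) ->
  (exists iota : game -> game,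
      bip_iso (Aoct_n d M) (Aoct d) iota /\
      (forall X, Aoct_n d M X -> equivA (Aoct d) (iota X) X)) /\
  (forall n, n0 <= n -> equivA (Aoct d) (Hn d (n + p)) (Hn d n)).
Proof.
move=> _ _ _ dk0 n0_gt0 p_gt0 M base; split; last exact: periodic base.
exists (fun X => X); split=> //; apply: bip_iso_id (closedA_A d) (@An_A d M) _ _.
- exact: equivA_AM_A base.
- by move=> Z /A_An [N /(AM_represents dk0 n0_gt0 p_gt0 base)].
Qed.
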